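(* Let $f_{\mathrm{MCP}}$ be the maximum coordinate plurality rule. In the $\ell^1$ linear social choice setting, the worst-case distortion of $f_{\mathrm{MCP}}$ satisfies $\mathrm{D}(f_{\mathrm{MCP}}) = O(d^3)$.
   Context: Setting ($\ell^1$ linear social choice). Fix a dimension $d\ge 1$ and let $\Delta_d=\{x\in\mathbb{R}^d_{\ge 0}:\sum_i x^i=1\}$ (superscripts denote coordinates). An instance consists of a finite set $V$ of $n$ voters and a finite set $C$ of $m$ candidates, each identified with a vector in $\Delta_d$, with the expressiveness assumption that every voter vector lies in $\mathrm{Cone}(C)$, the set of nonnegative linear combinations of candidate vectors. Voter $v$'s utility for candidate $c$ is $u_v(c)=v^\top c$. Each voter reports a ranking $\sigma_v$ of $C$ consistent with its utilities ($c$ is ranked above $c'$ only if $u_v(c)\ge u_v(c')$; ties broken arbitrarily); $\sigma=(\sigma_v)_{v\in V}$ is the preference profile. The utilitarian welfare of $c$ is $\mathrm{UW}(c)=\sum_{v\in V}u_v(c)$. A (possibly randomized) voting rule $f$ outputs a distribution over $C$ based on the profile (and, when its definition uses them, the candidate vectors), but never sees the voter vectors. Its distortion on an instance is $\max_{c\in C}\mathrm{UW}(c)/\mathbb{E}_{c\sim f}[\mathrm{UW}(c)]$, and its worst-case distortion $\mathrm{D}(f)$ is the supremum of this ratio over all instances (all $n,m$, all consistent rankings), viewed as a function of $d$. Maximum coordinate plurality: form a set $\hat C\subseteq C$ containing, for each coordinate $i\in[d]$, one candidate $c\in C$ maximizing the coordinate $c^i$ over $C$ (so $|\hat C|\le d$);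 restrict every voter's ranking to $\hat C$ and output a plurality winner (a candidate of $\hat C$ ranked first among $\hat C$ by the largest number of voters, ties broken arbitrarily). *)

From HB Require Import structures.
From mathcomp Require Import all_boot all_order all_algebra all_fingroup.
From mathcomp Require Import reals.
Set Implicit Arguments. Unset Strict Implicit. Unset Printing Implicit Defensive.
Import Order.TTheory GRing.Theory Num.Theory.
Local Open Scope ring_scope.

Section Defs.
Variable R : realType.
Variables (d n m : nat).

Definition in_simplex (x : 'I_d -> R) : Prop :=
  (forall i, 0 <= x i) /\ \sum_(i < d) x i = 1.

Definition in_cone (C : 'I_m -> 'I_d -> R) (x : 'I_d -> R) : Prop :=
  exists lam : 'I_m -> R, (forall j, 0 <= lam j) /\
    forall i, x i = \sum_(j < m) lam j * C j i.

Definition util (v c : 'I_d -> R) : R := \sum_(i < d) v i * c i.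

Definition UW (V : 'I_n -> 'I_d -> R) (C : 'I_m -> 'I_d -> R) (c : 'I_m) : R :=
  \sum_(v < n) util (V v) (C c).

(* sigma v c = position of c in voter v's ranking (0 = top);
   consistency: c ranked above c' only if u_v(c) >= u_v(c') *)
Definition consistent (V : 'I_n -> 'I_d -> R) (C : 'I_m -> 'I_d -> R)
    (sigma : 'I_n -> {perm 'I_m}) : Prop :=
  forall v c c', (sigma v c < sigma v c')%N -> util (V v) (C c') <= util (V v) (C c).

Definition mcp_choice (C : 'I_m -> 'I_d -> R) (chat : 'I_d -> 'I_m) : Prop :=
  forall i c, C c i <= C (chat i) i.

Definition Chat (chat : 'I_d -> 'I_m) : {set 'I_m} := [set chat i | i : 'I_d].

Definition top_in (sigma : 'I_n -> {perm 'I_m}) (S : {set 'I_m}) (v : 'I_n) (c : 'I_m) : bool :=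
  (c \in S) && [forall c' in S, (sigma v c <= sigma v c')%N].

Definition plur_score (sigma : 'I_n -> {perm 'I_m}) (S : {set 'I_m}) (c : 'I_m) : nat :=
  #|[set v : 'I_n | top_in sigma S v c]|.

Definition plurality_winner (sigma : 'I_n -> {perm 'I_m}) (S : {set 'I_m}) (w : 'I_m) : Prop :=
  w \in S /\ forall c, c \in S -> (plur_score sigma S c <= plur_score sigma S w)%N.

End Defs.

(** The top choice of a voter among the coordinate maximisers is a good
    candidate for that voter: some coordinate [i] of the voter carries weight
    at least [1/d], and since the voter is a convex combination of candidates,
    that weight is at most the [i]-th coordinate of the maximiser [chat i];
    so the voter's utility for [chat i], hence for its restricted top choice,
    is at least [1/d^2].  There are at most [d] coordinate maximisers, so the
    plurality winner is the restricted top choice of at least [n/d] voters,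
    and its welfare is at least [n/d^3], while no candidate has welfare above
    [n]. *)

From HB Require Import structures.
From mathcomp Require Import all_boot all_order all_algebra all_fingroup.
From mathcomp Require Import reals ring.
Import Order.TTheory GRing.Theory Num.Theory.
Local Open Scope ring_scope.

Section Simplex.
Context {R : realType} {d : nat}.
Implicit Types v c : 'I_d -> R.

Lemma util_ge0 v c : in_simplex v -> in_simplex c -> 0 <= util v c.
Proof.
by move=> [v_ge0 _] [c_ge0 _]; apply: sumr_ge0 => i _; apply: mulr_ge0.
Qed.

Lemma util_le1 v c : in_simplex v -> in_simplex c -> util v c <= 1.
Proof.
move=> [v_ge0 v_sum1] [c_ge0 c_sum1]; rewrite /util -v_sum1.
apply: ler_sum => i _; rewrite -[leRHS]mulr1 ler_wpM2l // -c_sum1.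
by rewrite (bigD1 i) //= lerDl sumr_ge0.
Qed.

Lemma util_ge_coord v c i : in_simplex v -> in_simplex c -> v i * c i <= util v c.
Proof.
move=> [v_ge0 _] [c_ge0 _]; rewrite /util (bigD1 i) //= lerDl.
by apply: sumr_ge0 => j _; apply: mulr_ge0.
Qed.

Lemma simplex_coord_ge_inv v : in_simplex v -> exists i, d%:R^-1 <= v i.
Proof.
move=> [v_ge0 v_sum1].
have [i0 _ | I_d_empty] := pickP (@predT 'I_d); last first.
  by move: v_sum1; rewrite big_pred0 // => /eqP; rewrite eq_sym oner_eq0.
have [i _ v_le_vi] := @arg_maxP _ R _ i0 predT v erefl.
have d_gt0 : 0 < d%:R :> R by rewrite ltr0n (leq_ltn_trans (leq0n i0)).
exists i; rewrite -[_^-1]mulr1 ler_pdivrMl // -[leLHS]v_sum1 mulr_natl.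
rewrite -[d in _ *+ d](card_ord d) -sumr_const.
by apply: ler_sum => j _; apply: v_le_vi.
Qed.

Context {m : nat} {C : 'I_m -> 'I_d -> R}.
Hypothesis C_simplex : forall j, in_simplex (C j).

(** Summing coordinates shows that the cone coefficients of a simplex vector
    sum to [1], so [v] is a convex combination of candidates. *)
Lemma cone_coord_le_max v (chat : 'I_d -> 'I_m) :
  mcp_choice C chat -> in_simplex v -> in_cone C v ->
  forall i, v i <= C (chat i) i.
Proof.
move=> chat_max [_ v_sum1] [lam [lam_ge0 v_def]] i.
have lam_sum1 : \sum_(j < m) lam j = 1.
  rewrite -v_sum1; under [RHS]eq_bigr => k _ do rewrite v_def.
  rewrite exchange_big /=; apply: eq_bigr => j _.
  by rewrite -mulr_sumr (proj2 (C_simplex j)) mulr1.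
rewrite v_def -[leRHS]mul1r -lam_sum1 mulr_suml.
by apply: ler_sum => j _; apply: ler_wpM2l.
Qed.

End Simplex.

Section Restricted_plurality.
Context {n m : nat} {sigma : 'I_n -> {perm 'I_m}} {S : {set 'I_m}}.

Lemma exists_top_in v : S != set0 -> exists t, top_in sigma S v t.
Proof.
case/set0Pn => c0 c0_in.
have [t t_in t_min] := arg_minnP (fun c => nat_of_ord (sigma v c)) c0_in.
by exists t; apply/andP; split => //; apply/forall_inP.
Qed.

Lemma top_in_util_ge {R : realType} {d} {V : 'I_n -> 'I_d -> R} {C} {v t c} :
  consistent V C sigma -> top_in sigma S v t -> c \in S ->
  util (V v) (C c) <= util (V v) (C t).
Proof.
move=> cons /andP[_ /forall_inP t_top] c_in.
have := t_top _ c_in; rewrite leq_eqVlt => /orP[/eqP/ord_inj/perm_inj-> // | lt].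
exact: cons.
Qed.

Lemma plur_scoreE c : plur_score sigma S c = (\sum_(v < n) top_in sigma S v c)%N.
Proof.
rewrite /plur_score -sum1_card big_mkcond /=.
by apply: eq_bigr => v _; rewrite inE; case: top_in.
Qed.

(** Pigeonhole: every voter has a top choice in [S], so the [n] top choices
    are shared among the [#|S|] candidates of [S]. *)
Lemma plurality_winner_score w :
  plurality_winner sigma S w -> (n <= #|S| * plur_score sigma S w)%N.
Proof.
move=> [w_in w_max].
have S_neq0 : S != set0 by apply/set0Pn; exists w.
apply: (@leq_trans (\sum_(c in S) plur_score sigma S c)); last first.
  by rewrite -sum_nat_const leq_sum.
under eq_bigr => c _ do rewrite plur_scoreE.
rewrite exchange_big /= -[X in (X <= _)%N]card_ord -sum1_card leq_sum // => v _.
have [t t_top] := exists_top_in v S_neq0.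
have t_in : t \in S by case/andP: t_top.
by rewrite (bigD1 t) //= t_top leq_addr.
Qed.

End Restricted_plurality.

Lemma card_Chat d m (chat : 'I_d -> 'I_m) : (#|Chat chat| <= d)%N.
Proof. by rewrite -[X in (_ <= X)%N]card_ord leq_imset_card. Qed.

Section Welfare.
Context {R : realType} {d n m : nat}.
Context {V : 'I_n -> 'I_d -> R} {C : 'I_m -> 'I_d -> R}.
Hypothesis V_simplex : forall v, in_simplex (V v).
Hypothesis C_simplex : forall c, in_simplex (C c).

Lemma UW_le_n c : UW V C c <= n%:R.
Proof.
rewrite /UW -[n in n%:R]card_ord -sumr_const.
by apply: ler_sum => v _; apply: util_le1.
Qed.

Lemma UW_ge_card c (A : {set 'I_n}) (a : R) :
  (forall v, v \in A -> a <= util (V v) (C c)) -> #|A|%:R * a <= UW V C c.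
Proof.
move=> A_ge; rewrite /UW (bigID (mem A)) /= mulr_natl -sumr_const.
rewrite ler_wpDr ?ler_sum //.
by apply: sumr_ge0 => v _; apply: util_ge0.
Qed.

Lemma top_in_Chat_util_ge sigma (chat : 'I_d -> 'I_m) v t :
  (forall v, in_cone C (V v)) -> consistent V C sigma -> mcp_choice C chat ->
  top_in sigma (Chat chat) v t -> (d%:R ^+ 2)^-1 <= util (V v) (C t).
Proof.
move=> V_cone cons chat_max t_top.
have [i vi_ge] := simplex_coord_ge_inv _ (V_simplex v).
have vi_le := cone_coord_le_max C_simplex _ _ chat_max (V_simplex v) (V_cone v) i.
have chat_in : chat i \in Chat chat by apply: imset_f.
have inv_ge0 : 0 <= d%:R^-1 :> R by rewrite invr_ge0.
apply: le_trans _ (top_in_util_ge cons t_top chat_in).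
apply: le_trans _ (util_ge_coord _ _ i (V_simplex v) (C_simplex _)).
by rewrite expr2 invfM ler_pM // (le_trans vi_ge).
Qed.

End Welfare.

Theorem theorem3 (R : realType) :
  exists (K : R) (d0 : nat), 0 < K /\
  forall (d n m : nat) (V : 'I_n -> 'I_d -> R) (C : 'I_m -> 'I_d -> R)
    (sigma : 'I_n -> {perm 'I_m}) (chat : 'I_d -> 'I_m) (w : 'I_m),
    (1 <= d)%N -> (d0 <= d)%N ->
    (forall v, in_simplex (V v)) ->
    (forall c, in_simplex (C c)) ->
    (forall v, in_cone C (V v)) ->
    consistent V C sigma ->
    mcp_choice C chat ->
    plurality_winner sigma (Chat chat) w ->
    forall c : 'I_m, UW V C c <= K * (d%:R) ^+ 3 * UW V C w.
Proof.
exists 1, 0%N; split => // d n m V C sigma chat w d_ge1 _ V_simplex C_simplex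
  V_cone cons chat_max w_win c; rewrite mul1r.
set s := plur_score sigma (Chat chat) w.
have n_le : (n <= d * s)%N.
  by rewrite (leq_trans (plurality_winner_score _ w_win)) // leq_mul2r card_Chat orbT.
have UWw_ge : s%:R * (d%:R ^+ 2)^-1 <= UW V C w.
  apply: UW_ge_card => // v; rewrite inE.
  exact: top_in_Chat_util_ge.
have d_gt0 : 0 < d%:R :> R by rewrite ltr0n.
have -> : d%:R ^+ 3 * UW V C w =
    d%:R * s%:R + d%:R ^+ 3 * (UW V C w - s%:R * (d%:R ^+ 2)^-1).
  by field; rewrite gt_eqF.
apply: le_trans (UW_le_n V_simplex C_simplex c) _; apply: ler_wpDr.
- by rewrite mulr_ge0 ?subr_ge0 // exprn_ge0 // ltW.
- by rewrite -natrM ler_nat.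
Qed.
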